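(* Let $\phi:\mathbb{R}\to\mathbb{R}$ be differentiable and let $f(z)=A\phi(Bz)$ with $A\in\mathbb{R}^{k_0\times k}$, $B\in\mathbb{R}^{k\times k_0}$, $z\in\mathbb{R}^{k_0}$. Let $x\in\mathbb{R}^{k_0}$ and run gradient descent with learning rate $\gamma>0$ on $\mathcal{L}(x,f)=\frac12\|x-f(x)\|_2^2$, i.e. $A^{(t+1)}=A^{(t)}+\gamma(x-A^{(t)}\phi(B^{(t)}x))\phi(B^{(t)}x)^T$, $B^{(t+1)}=B^{(t)}+\gamma\,\mathrm{diag}(\phi'(B^{(t)}x)){A^{(t)}}^T(x-A^{(t)}\phi(B^{(t)}x))x^T$. If $A^{(0)}=x{a^{(0)}}^T$ and $B^{(0)}=b^{(0)}x^T$ for some $a^{(0)},b^{(0)}\in\mathbb{R}^k$, then for all time steps $t$ there exist $a^{(t)},b^{(t)}\in\mathbb{R}^k$ with $A^{(t)}=x{a^{(t)}}^T$ and $B^{(t)}=b^{(t)}x^T$.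
   Context: $\phi$ and $\phi'$ are applied coordinatewise; $\mathrm{diag}(w)$ is the diagonal matrix with diagonal $w$. *)

From mathcomp Require Import all_boot all_order all_algebra.
From mathcomp Require Import all_classical all_reals all_analysis.
Set Implicit Arguments. Unset Strict Implicit. Unset Printing Implicit Defensive.
Import Order.TTheory GRing.Theory Num.Theory.
Local Open Scope ring_scope.

Definition cw (R : realType) (phi : R -> R) (n : nat) (v : 'cV[R]_n) : 'cV[R]_n :=
  map_mx phi v.

Definition gd_A (R : realType) (phi : R -> R) (k0 k : nat) (gamma : R)
  (x : 'cV[R]_k0) (A : 'M[R]_(k0, k)) (B : 'M[R]_(k, k0)) : 'M[R]_(k0, k) :=
  A + gamma *: ((x - A *m cw phi (B *m x)) *m (cw phi (B *m x))^T).

Definition gd_B (R : realType) (phi : R -> R) (k0 k : nat) (gamma : R)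
  (x : 'cV[R]_k0) (A : 'M[R]_(k0, k)) (B : 'M[R]_(k, k0)) : 'M[R]_(k, k0) :=
  B + gamma *: (diag_mx (cw (derive1 phi) (B *m x))^T *m A^T
                 *m (x - A *m cw phi (B *m x)) *m x^T).

From mathcomp Require Import all_boot all_order all_algebra.
From mathcomp Require Import all_classical all_reals all_analysis.
Import Order.TTheory GRing.Theory Num.Theory.
Local Open Scope ring_scope.

(* Both updates add to the current weight a matrix whose column space (for A)
   or row space (for B) lies in the span of x: for A because the residual
   x - x a^T u is itself x times the scalar 1 - a^T u, for B because the
   gradient of B always ends with the factor x^T.  Induction on t then keeps
   A = x a^T and B = b x^T. *)

Lemma subr_mulmx_rank_one (R : pzRingType) (m n : nat)
    (x : 'cV[R]_m) (a u : 'cV[R]_n) :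
  x - x *m a^T *m u = x *m (1%:M - a^T *m u).
Proof. by rewrite mulmxBr mulmx1 mulmxA. Qed.

Lemma gd_A_rank_one (R : realType) (phi : R -> R) (k0 k : nat) (gamma : R)
    (x : 'cV[R]_k0) (a : 'cV[R]_k) (B : 'M[R]_(k, k0)) :
  let u := cw phi (B *m x) in
  gd_A phi gamma x (x *m a^T) B
  = x *m (a^T + gamma *: ((1%:M - a^T *m u) *m u^T)).
Proof.
by rewrite /gd_A subr_mulmx_rank_one [RHS]mulmxDr -!scalemxAr mulmxA.
Qed.

Lemma gd_B_rank_one (R : realType) (phi : R -> R) (k0 k : nat) (gamma : R)
    (x : 'cV[R]_k0) (A : 'M[R]_(k0, k)) (b : 'cV[R]_k) :
  let u := cw phi (b *m x^T *m x) in
  let D := diag_mx (cw (derive1 phi) (b *m x^T *m x))^T in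
  gd_B phi gamma x A (b *m x^T)
  = (b + gamma *: (D *m A^T *m (x - A *m u))) *m x^T.
Proof. by rewrite /gd_B mulmxDl -scalemxAl. Qed.

Theorem mainTheorem5 (R : realType) (phi : R -> R) (k0 k : nat) (gamma : R)
  (x : 'cV[R]_k0) (A : nat -> 'M[R]_(k0, k)) (B : nat -> 'M[R]_(k, k0))
  (a0 b0 : 'cV[R]_k) :
  (forall r : R, derivable phi r 1) ->
  0 < gamma ->
  (forall t, A t.+1 = gd_A phi gamma x (A t) (B t)) ->
  (forall t, B t.+1 = gd_B phi gamma x (A t) (B t)) ->
  A 0%N = x *m a0^T -> B 0%N = b0 *m x^T ->
  forall t : nat, exists a b : 'cV[R]_k, A t = x *m a^T /\ B t = b *m x^T.
Proof.
move=> _ _ A_step B_step A0 B0; elim=> [|t [a [b [At Bt]]]].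
  by exists a0, b0.
rewrite A_step B_step At Bt gd_A_rank_one gd_B_rank_one.
by eexists _^T, _; rewrite trmxK.
Qed.
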